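(* For any graph $G$ of order $n$, $\gamma_{qtR}(G)\le n-\rho(G)(\delta(G)-2)$.
   Context: All graphs are finite, simple and undirected; $\delta(G)$ is the minimum degree. A set $B\subseteq V(G)$ is a packing if $N[u]\cap N[v]=\emptyset$ for all distinct $u,v\in B$; the packing number $\rho(G)$ is the maximum size of a packing. For $f:V(G)\to\{0,1,2\}$ write $V_i=\{v:f(v)=i\}$; weight $\omega(f)=|V_1|+2|V_2|$. A quasi-total Roman dominating function (QTRDF) is an $f$ such that every vertex labeled $0$ is adjacent to a vertex labeled $2$, and every vertex isolated in the subgraph induced by $V_1\cup V_2$ has label $1$; $\gamma_{qtR}(G)$ is the minimum weight of a QTRDF. *)

From mathcomp Require Import all_boot all_order all_algebra.
Set Implicit Arguments. Unset Strict Implicit. Unset Printing Implicit Defensive.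

(* A finite simple graph: vertex type T : finType, adjacency e : rel T,
   assumed symmetric and irreflexive (hypotheses of the theorem). *)

Section Graph.
Variables (T : finType) (e : rel T).

Definition onbhd (v : T) : {set T} := [set u | e v u].
Definition cnbhd (v : T) : {set T} := v |: onbhd v.

Definition deg (v : T) : nat := #|onbhd v|.

(* minimum degree; for the empty graph this is #|T| = 0 *)
Definition min_deg : nat := \big[minn/#|T|]_(v : T) deg v.

Definition packing (B : {set T}) : bool :=
  [forall u in B, forall v in B, (u != v) ==> [disjoint cnbhd u & cnbhd v]].

Definition packing_number : nat := \max_(B : {set T} | packing B) #|B|.

Definition weight (f : {ffun T -> 'I_3}) : nat := \sum_(v : T) (f v : nat).

Definition qtrdf (f : {ffun T -> 'I_3}) : bool :=
  [forall v, ((f v : nat) == 0) ==> [exists u, e v u && ((f u : nat) == 2)]] &&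
  [forall v, (((f v : nat) != 0) && [forall u, e v u ==> ((f u : nat) == 0)])
               ==> ((f v : nat) == 1)].

(* minimum weight of a QTRDF; the all-ones labelling is a QTRDF of weight
   #|T|, so taking #|T| as the neutral element of minn is harmless *)
Definition gamma_qtR : nat := \big[minn/#|T|]_(f | qtrdf f) weight f.

End Graph.

From mathcomp Require Import all_boot all_order all_algebra.
From mathcomp Require Import zify.
Set Implicit Arguments. Unset Strict Implicit. Unset Printing Implicit Defensive.
Import Order.TTheory.

(* Take a maximum packing B, let N be the union of the open neighbourhoods of
   its vertices (disjoint, so |N| >= |B| delta, and disjoint from B), choose one
   neighbour of each vertex of B and let Z be N minus these chosen neighbours.
   Labelling B with 2, Z with 0 and everything else with 1 is a QTRDF: each
   vertex of Z sees B, and each vertex of B sees its chosen neighbour, which is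
   labelled 1. Its weight is n + |B| - |Z| <= n + 2|B| - |N| <= n - |B|(delta - 2). *)

Lemma card_bigcup_disjoint (I T : finType) (P : pred I) (F : I -> {set T}) :
    (forall i j, P i -> P j -> i != j -> [disjoint F i & F j]) ->
  #|\bigcup_(i | P i) F i| = \sum_(i | P i) #|F i|.
Proof.
move=> disjF; pose G i := if P i then F i else set0.
have -> : \bigcup_(i | P i) F i = \bigcup_i G i by rewrite big_mkcond.
rewrite -sum1_card partition_disjoint_bigcup => [|i j neq_ij].
  rewrite [RHS]big_mkcond; apply: eq_bigr => i _.
  by rewrite sum1_card /G; case: (P i); rewrite ?cards0.
rewrite /G; case Pi: (P i); case Pj: (P j); first exact: disjF.
all: by rewrite -setI_eq0 ?setI0 ?set0I.
Qed.

Section QuasiTotalRomanPacking.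
Variables (T : finType) (e : rel T).
Hypotheses (e_sym : symmetric e) (e_irr : irreflexive e).

Lemma gamma_qtR_le f : qtrdf e f -> gamma_qtR e <= weight f.
Proof. by move=> qf; rewrite /gamma_qtR -minEnat -leEnat; exact: bigmin_le_cond. Qed.

Lemma gamma_qtR_le_card : gamma_qtR e <= #|T|.
Proof. by rewrite /gamma_qtR -minEnat -leEnat; exact: bigmin_le_id. Qed.

Lemma min_deg_le v : min_deg e <= deg e v.
Proof. by rewrite /min_deg -minEnat -leEnat; exact: bigmin_le_cond. Qed.

Lemma packing_disjoint (B : {set T}) u v :
  packing e B -> u \in B -> v \in B -> u != v -> [disjoint cnbhd e u & cnbhd e v].
Proof. by move=> /forall_inP PB /PB /forall_inP PBu /PBu /implyP. Qed.

Lemma max_packing_exists : exists2 B, packing e B & #|B| = packing_number e.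
Proof.
have packing0 : packing e set0 by apply/forallP => u; rewrite in_set0.
rewrite /packing_number (bigop.bigmax_eq_arg _ packing0).
by case: arg_maxnP => // B PB _; exists B.
Qed.

Definition labelling (A Z : {set T}) : {ffun T -> 'I_3} :=
  [ffun x => inord (if x \in A then 2 else if x \in Z then 0 else 1)].

Lemma labellingE (A Z : {set T}) x :
  (labelling A Z x : nat) = if x \in A then 2 else if x \in Z then 0 else 1.
Proof. by rewrite ffunE inordK //; case: ifP => _; [|case: ifP]. Qed.

Lemma weight_labelling (A Z : {set T}) :
  [disjoint A & Z] -> weight (labelling A Z) + #|Z| = #|T| + #|A|.
Proof.
move=> /pred0P dAZ; rewrite -!sum1_card !(big_mkcond (fun x => x \in _)) -!big_split.
apply: eq_bigr => x _; rewrite labellingE.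
by have := dAZ x; rewrite /=; case: (x \in A); case: (x \in Z).
Qed.

Lemma labelling_qtrdf (A Z : {set T}) :
    {in Z, forall z, exists2 a, a \in A & e z a} ->
    {in A, forall a, exists2 u, e a u & u \notin Z} ->
  qtrdf e (labelling A Z).
Proof.
move=> Z_dom A_nbr; apply/andP; split; apply/forallP => v; apply/implyP.
  rewrite labellingE; case: ifP => // vA; case: ifP => // vZ _.
  have [a aA eva] := Z_dom v vZ.
  by apply/existsP; exists a; rewrite eva labellingE aA.
rewrite labellingE; case: ifP => [vA /andP [_ /forallP isolated]|]; last by case: ifP.
have [u evu uZ] := A_nbr v vA.
by move: (isolated u); rewrite evu labellingE (negbTE uZ); case: ifP.
Qed.

Definition nbr (v : T) : T := odflt v [pick u | e v u].

Lemma nbrP v : 0 < deg e v -> e v (nbr v).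
Proof.
rewrite /nbr; case: pickP => [u //|none].
by rewrite /deg card_gt0 => /set0Pn [u]; rewrite inE none.
Qed.

Definition onbhd_set (B : {set T}) : {set T} := \bigcup_(v in B) onbhd e v.

Lemma card_onbhd_packing (B : {set T}) :
  packing e B -> #|onbhd_set B| = \sum_(v in B) deg e v.
Proof.
move=> PB; apply: card_bigcup_disjoint => u v uB vB neq_uv.
have sub w : onbhd e w \subset cnbhd e w by exact: subsetUr.
exact: disjointWl (sub u) (disjointWr (sub v) (packing_disjoint PB uB vB neq_uv)).
Qed.

Lemma packing_disjoint_onbhd_set (B : {set T}) :
  packing e B -> [disjoint B & onbhd_set B].
Proof.
move=> PB; rewrite -setI_eq0; apply/eqP/setP => x; rewrite !inE.
apply/negbTE/andP => -[xB /bigcupP [v vB]]; rewrite inE => evx.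
have neq_xv : x != v by apply: contraTneq evx => ->; rewrite e_irr.
have := packing_disjoint PB xB vB neq_xv; rewrite -setI_eq0 => /eqP/setP/(_ x).
by rewrite !inE eqxx evx orbT.
Qed.

Lemma gamma_qtR_packing_bound (B : {set T}) : 0 < min_deg e -> packing e B ->
  gamma_qtR e + #|B| * min_deg e <= #|T| + 2 * #|B|.
Proof.
move=> deg_pos PB; set N := onbhd_set B; set Z := N :\: nbr @: B.
have dBZ : [disjoint B & Z].
  exact: disjointWr (subsetDl _ _) (packing_disjoint_onbhd_set PB).
have qf : qtrdf e (labelling B Z).
  apply: labelling_qtrdf => [z /setDP [/bigcupP [a aB] + _]|a aB].
    by rewrite inE e_sym; exists a.
  exists (nbr a); first exact/nbrP/(leq_trans deg_pos (min_deg_le a)).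
  by rewrite inE imset_f.
have cardZ : #|N| <= #|Z| + #|B|.
  have := leq_imset_card nbr B; have := subset_leq_card (subsetIr N (nbr @: B)).
  rewrite cardsD; lia.
have cardN : #|B| * min_deg e <= #|N|.
  rewrite card_onbhd_packing // -sum_nat_const.
  by apply: leq_sum => v _; exact: min_deg_le.
have := gamma_qtR_le qf; have := weight_labelling dBZ; lia.
Qed.

End QuasiTotalRomanPacking.

Theorem mainTheorem8 (T : finType) (e : rel T)
  (e_sym : symmetric e) (e_irr : irreflexive e) :
  ((gamma_qtR e)%:Z <= (#|T|)%:Z
     - (packing_number e)%:Z * ((min_deg e)%:Z - 2%:Z))%R.
Proof.
have [B PB <-] := max_packing_exists e.
have := gamma_qtR_le_card e.
case: (posnP (min_deg e)) => [-> | deg_pos]; first lia.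
have := gamma_qtR_packing_bound e_sym e_irr deg_pos PB; nia.
Qed.
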